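(* Define $A(n_1,n_2,n_3,n_4)$ for $n_1,\dots,n_4 \in \mathbb{Z}_{\geq 0}$ by $$\frac{1}{(1 - x_1 - x_2)(1 - x_3 - x_4) - x_1 x_2 x_3 x_4} = \sum_{n_1,n_2,n_3,n_4 \geq 0} A(n_1,n_2,n_3,n_4)\, x_1^{n_1}x_2^{n_2}x_3^{n_3}x_4^{n_4}.$$ Then for all $n_1,\dots,n_4 \geq 0$, $$A(n_1,n_2,n_3,n_4) = \sum_{k \in \mathbb{Z}} \binom{n_1}{k}\binom{n_3}{k}\binom{n_1+n_2-k}{n_1}\binom{n_3+n_4-k}{n_3},$$ and moreover $A(n_1,n_2,n_3,n_4)$ is the constant term of the Laurent polynomial $$\frac{(x_1+x_2+x_3)^{n_1}(x_1+x_2)^{n_2}(x_3+x_4)^{n_3}(x_2+x_3+x_4)^{n_4}}{x_1^{n_1}x_2^{n_2}x_3^{n_3}x_4^{n_4}}.$$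
   Context: Binomial coefficients with integer entries are the usual ones; $\binom{n}{k}=0$ for $k<0$ or $k>n$ when $n \ge 0$. *)

From HB Require Import structures.
From mathcomp Require Import all_boot all_order all_algebra.
Set Implicit Arguments. Unset Strict Implicit. Unset Printing Implicit Defensive.
Import Order.TTheory GRing.Theory Num.Theory.
Local Open Scope ring_scope.

(* ser: coefficient of x1^a x2^b x3^c x4^d is  f a b c d *)
Definition ser := nat -> nat -> nat -> nat -> int.

Definition sadd (f g : ser) : ser := fun a b c d => f a b c d + g a b c d.
Definition sopp (f : ser) : ser := fun a b c d => - f a b c d.
Definition ssub (f g : ser) : ser := sadd f (sopp g).

Definition smul (f g : ser) : ser := fun a b c d =>
  \sum_(i < a.+1) \sum_(j < b.+1) \sum_(k < c.+1) \sum_(l < d.+1)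
     f i j k l * g (a - i)%N (b - j)%N (c - k)%N (d - l)%N.

Definition smono (e1 e2 e3 e4 : nat) : ser := fun a b c d =>
  ([&& a == e1, b == e2, c == e3 & d == e4] : bool)%:R.

Definition sone : ser := smono 0 0 0 0.
Definition X1 : ser := smono 1 0 0 0.
Definition X2 : ser := smono 0 1 0 0.
Definition X3 : ser := smono 0 0 1 0.
Definition X4 : ser := smono 0 0 0 1.

Definition spow (f : ser) (n : nat) : ser := iter n (smul f) sone.

Definition Dser : ser :=
  ssub (smul (ssub sone (sadd X1 X2)) (ssub sone (sadd X3 X4)))
       (smul (smul X1 X2) (smul X3 X4)).

Definition Lnum (n1 n2 n3 n4 : nat) : ser :=
  smul (smul (spow (sadd (sadd X1 X2) X3) n1) (spow (sadd X1 X2) n2))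
       (smul (spow (sadd X3 X4) n3) (spow (sadd (sadd X2 X3) X4) n4)).

(* constant term of  P / (x1^n1 x2^n2 x3^n3 x4^n4)  for a polynomial P *)
Definition ct_div (P : ser) (n1 n2 n3 n4 : nat) : int := P n1 n2 n3 n4.

From HB Require Import structures.
From mathcomp Require Import all_boot all_order all_algebra.
From mathcomp Require Import zify ring.
From Stdlib Require Import FunctionalExtensionality.
Import Order.TTheory GRing.Theory Num.Theory.
Local Open Scope ring_scope.

(* 1. Multiplying by a monomial shifts coefficients, so the coefficients of D * A
      are given by a finite difference operator Dop A (Dser_conv).  Dop only looks
      at lower total degrees besides the leading term, hence it is injective
      (Dop_inj): D has at most one inverse.
   2. binf k n m = C(n,k) C(n+m-k,n) is the coefficient of x^n y^m in
      (xy)^k / (1-x-y)^(k+1).  Pascal's rule says that (1-x-y) maps binf 0 to 1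
      and binf (k+1) to xy * binf k (Lop_binr0, Lop_binrS).  Because
      D = (1-x1-x2)(1-x3-x4) - x1x2 x3x4, D applied to the block
      binf k (x1,x2) * binf k (x3,x4) is a difference of consecutive "corner"
      terms, and the sum over k telescopes to 1 (Aser_inverse).  This identifies
      the inverse of D with the binomial sum Aser.
   3. The numerator of the Laurent polynomial is a polynomial, computed in
      {poly {poly {poly {poly int}}}} where products of series become products
      of polynomials.  Expanding it binomially and reading off the coefficient of
      x1^n1 x2^n2 x3^n3 x4^n4 gives the same binomial sum (coef_Lpoly). *)

Lemma ser_ext (f g : ser) : (forall a b c d, f a b c d = g a b c d) -> f = g.
Proof. by move=> fg; do 4 apply: functional_extensionality => ?; exact: fg. Qed.

Definition shift (e1 e2 e3 e4 : nat) (A : ser) : ser := fun a b c d =>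
  if [&& e1 <= a, e2 <= b, e3 <= c & e4 <= d]%N
  then A (a - e1)%N (b - e2)%N (c - e3)%N (d - e4)%N else 0.

Lemma smul_addl f g h : smul (sadd f g) h = sadd (smul f h) (smul g h).
Proof.
apply: ser_ext => a b c d; rewrite /smul /sadd -big_split; apply: eq_bigr => i _.
rewrite -big_split; apply: eq_bigr => j _.
rewrite -big_split; apply: eq_bigr => k _.
by rewrite -big_split; apply: eq_bigr => l _; rewrite mulrDl.
Qed.

Lemma smul_subl f g h : smul (ssub f g) h = ssub (smul f h) (smul g h).
Proof.
rewrite /ssub smul_addl; congr sadd.
apply: ser_ext => a b c d; rewrite /smul /sopp -sumrN; apply: eq_bigr => i _.
rewrite -sumrN; apply: eq_bigr => j _.
rewrite -sumrN; apply: eq_bigr => k _.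
by rewrite -sumrN; apply: eq_bigr => l _; rewrite mulNr.
Qed.

Lemma sum_delta (R : pzSemiRingType) n t (F : nat -> R) :
  \sum_(0 <= i < n) (i == t)%:R * F i = (t < n)%N%:R * F t.
Proof.
rewrite big_mkord (eq_bigr (fun i : 'I_n => if i == t :> nat then F i else 0)).
  by rewrite -big_mkcond big_ord1_eq; case: (t < n)%N; rewrite ?mul1r ?mul0r.
by move=> i _; case: eqP; rewrite ?mul1r ?mul0r.
Qed.

Lemma smul_smono e1 e2 e3 e4 A : smul (smono e1 e2 e3 e4) A = shift e1 e2 e3 e4 A.
Proof.
apply: ser_ext => a b c d; rewrite /smul /smono /shift.
transitivity (\sum_(0 <= i < a.+1) (i == e1)%:R *
  \sum_(0 <= j < b.+1) (j == e2)%:R * \sum_(0 <= k < c.+1) (k == e3)%:R *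
  \sum_(0 <= l < d.+1) (l == e4)%:R * A (a - i)%N (b - j)%N (c - k)%N (d - l)%N).
  rewrite big_mkord; apply: eq_bigr => i _; rewrite mulr_sumr big_mkord.
  apply: eq_bigr => j _; rewrite !mulr_sumr big_mkord; apply: eq_bigr => k _.
  rewrite !mulr_sumr big_mkord; apply: eq_bigr => l _.
  by case: eqP; case: eqP; case: eqP; case: eqP; rewrite /= ?mul0r ?mul1r ?mulr0.
rewrite sum_delta ltnS; case: (e1 <= a)%N; rewrite /= ?mul0r ?mul1r //.
rewrite sum_delta ltnS; case: (e2 <= b)%N; rewrite /= ?mul0r ?mul1r //.
rewrite sum_delta ltnS; case: (e3 <= c)%N; rewrite /= ?mul0r ?mul1r //.
by rewrite sum_delta ltnS; case: (e4 <= d)%N; rewrite /= ?mul0r ?mul1r.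
Qed.

Notation P4 := {poly {poly {poly {poly int}}}}.

(* Coefficient function of a polynomial; locked so that rewriting stays cheap. *)
Definition toSer : P4 -> ser := locked (fun (p : P4) a b c d => p`_a`_b`_c`_d).

Lemma toSerE p a b c d : toSer p a b c d = p`_a`_b`_c`_d.
Proof. by rewrite /toSer -lock. Qed.

Lemma toSerM p q : smul (toSer p) (toSer q) = toSer (p * q).
Proof.
apply: ser_ext => a b c d; rewrite /smul toSerE coefM !coef_sum.
apply: eq_bigr => i _; rewrite coefM !coef_sum.
apply: eq_bigr => j _; rewrite coefM !coef_sum.
by apply: eq_bigr => k _; rewrite coefM; apply: eq_bigr => l _; rewrite !toSerE.
Qed.

Lemma toSerD p q : sadd (toSer p) (toSer q) = toSer (p + q).
Proof. by apply: ser_ext => a b c d; rewrite /sadd !toSerE !coefD. Qed.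

Lemma toSerB p q : ssub (toSer p) (toSer q) = toSer (p - q).
Proof. by apply: ser_ext => a b c d; rewrite /ssub /sadd /sopp !toSerE !coefB. Qed.

Definition mono4 a b c d : P4 :=
  'X^a * ('X^b * ('X^c * ('X^d)%:P)%:P)%:P.

Lemma coef_mono4 a b c d i j k l :
  (mono4 a b c d)`_i`_j`_k`_l = ([&& i == a, j == b, k == c & l == d])%:R.
Proof.
rewrite /mono4 coefMC coefXn; case: (i == a); last by rewrite mul0r !coef0.
rewrite mul1r coefMC coefXn; case: (j == b); last by rewrite mul0r !coef0.
rewrite mul1r coefMC coefXn; case: (k == c); last by rewrite mul0r !coef0.
by rewrite mul1r coefXn.
Qed.

Lemma toSer_mono a b c d : smono a b c d = toSer (mono4 a b c d).
Proof. by apply: ser_ext => i j k l; rewrite toSerE coef_mono4. Qed.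

Lemma toSer1 : sone = toSer 1.
Proof. by rewrite /sone toSer_mono /mono4 !expr0 !rmorph1 !mulr1. Qed.

Lemma toSerX p n : spow (toSer p) n = toSer (p ^+ n).
Proof.
elim: n => [|n IH]; first by rewrite expr0 -toSer1.
by rewrite /spow iterS -/(spow _ n) IH toSerM exprS.
Qed.

Definition x1 : P4 := mono4 1 0 0 0.
Definition x2 : P4 := mono4 0 1 0 0.
Definition x3 : P4 := mono4 0 0 1 0.
Definition x4 : P4 := mono4 0 0 0 1.

Lemma mono4E a b c d : mono4 a b c d = x1 ^+ a * x2 ^+ b * x3 ^+ c * x4 ^+ d.
Proof.
rewrite /x1 /x2 /x3 /x4 /mono4 !expr0 !rmorph1 !mulr1 !mul1r !expr1.
by rewrite !rmorphM !rmorphXn !mulrA.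
Qed.

Lemma Dser_monomials : Dser =
  ssub (sadd (sadd (sadd (sadd (ssub (ssub (ssub (ssub
    (smono 0 0 0 0) (smono 1 0 0 0)) (smono 0 1 0 0)) (smono 0 0 1 0))
    (smono 0 0 0 1)) (smono 1 0 1 0)) (smono 1 0 0 1)) (smono 0 1 1 0))
    (smono 0 1 0 1)) (smono 1 1 1 1).
Proof.
rewrite /Dser /X1 /X2 /X3 /X4 /sone !toSer_mono.
rewrite !(toSerD, toSerB, toSerM); congr toSer.
by rewrite !mono4E; ring.
Qed.

Definition Lpoly n1 n2 n3 n4 : P4 :=
  ((x1 + x2 + x3) ^+ n1 * (x1 + x2) ^+ n2) * ((x3 + x4) ^+ n3 * (x2 + x3 + x4) ^+ n4).

Lemma Lnum_poly n1 n2 n3 n4 : Lnum n1 n2 n3 n4 = toSer (Lpoly n1 n2 n3 n4).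
Proof. by rewrite /Lnum /X1 /X2 /X3 /X4 !toSer_mono !(toSerD, toSerX, toSerM). Qed.

Definition Dop (A : ser) : ser := fun a b c d =>
  A a b c d - shift 1 0 0 0 A a b c d - shift 0 1 0 0 A a b c d
  - shift 0 0 1 0 A a b c d - shift 0 0 0 1 A a b c d
  + shift 1 0 1 0 A a b c d + shift 1 0 0 1 A a b c d
  + shift 0 1 1 0 A a b c d + shift 0 1 0 1 A a b c d
  - shift 1 1 1 1 A a b c d.

Lemma Dser_conv A : smul Dser A = Dop A.
Proof.
rewrite Dser_monomials !(smul_addl, smul_subl) !smul_smono.
by apply: ser_ext => a b c d; rewrite /ssub /sadd /sopp /Dop {1}/shift !subn0.
Qed.

Lemma shift_congr e1 e2 e3 e4 A B a b c d :
  ([&& e1 <= a, e2 <= b, e3 <= c & e4 <= d]%N ->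
    A (a - e1)%N (b - e2)%N (c - e3)%N (d - e4)%N =
    B (a - e1)%N (b - e2)%N (c - e3)%N (d - e4)%N) ->
  shift e1 e2 e3 e4 A a b c d = shift e1 e2 e3 e4 B a b c d.
Proof. by rewrite /shift; case: ifP => // _ ->. Qed.

Lemma Dop_congr A B a b c d :
  (forall x y z w, (x <= a)%N -> (y <= b)%N -> (z <= c)%N -> (w <= d)%N ->
     A x y z w = B x y z w) ->
  Dop A a b c d = Dop B a b c d.
Proof.
move=> AB; have shiftAB e1 e2 e3 e4 :
    shift e1 e2 e3 e4 A a b c d = shift e1 e2 e3 e4 B a b c d.
  by apply: shift_congr => _; apply: AB; apply: leq_subr.
by rewrite /Dop !shiftAB AB.
Qed.

(* Dop A = A - (terms of lower total degree), so Dop is injective; in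
   particular D has at most one inverse. *)
Lemma Dop_inj A B : Dop A = Dop B -> A = B.
Proof.
move=> DAB; apply: ser_ext.
suff below s a b c d : (a + b + c + d < s)%N -> A a b c d = B a b c d.
  by move=> a b c d; apply: (below (a + b + c + d).+1).
elim: s a b c d => [//|s IH] a b c d hs.
have lower e1 e2 e3 e4 : (0 < e1 + e2 + e3 + e4)%N ->
    shift e1 e2 e3 e4 A a b c d = shift e1 e2 e3 e4 B a b c d.
  by move=> he; apply: shift_congr => /and4P[? ? ? ?]; apply: IH; lia.
have := congr1 (fun F => F a b c d) DAB; rewrite /Dop !lower //; lia.
Qed.

(* Coefficient of x^n y^m in (xy)^k / (1-x-y)^(k+1). *)
Definition binf (k n m : nat) : nat := 'C(n, k) * 'C(n + m - k, n).

Lemma binf_small k n m : (n < k)%N -> binf k n m = 0%N.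
Proof. by move=> ltnk; rewrite /binf bin_small. Qed.

Lemma binf_smallr k n m : (m < k)%N -> binf k n m = 0%N.
Proof.
move=> ltmk; case: (ltnP n k) => [ltnk | lekn]; first exact: binf_small.
by rewrite /binf (bin_small (n := n + m - k)) ?muln0 //; lia.
Qed.

Lemma binf0 n m : binf 0 n m = 'C(n + m, n).
Proof. by rewrite /binf bin0 subn0 mul1n. Qed.

(* binf k n m = (n+m-k)! / (k! (n-k)! (m-k)!) is symmetric in n and m. *)
Lemma binf_sym k n m : binf k n m = binf k m n.
Proof.
case: (ltnP n k) => [ltnk | lekn]; first by rewrite binf_small ?binf_smallr.
case: (ltnP m k) => [ltmk | lekm]; first by rewrite binf_smallr ?binf_small.
rewrite /binf addnC; set T := (m + n - k)%N.
have fact_pos : (0 < k`! * (n - k)`! * (m - k)`!)%N by rewrite !muln_gt0 !fact_gt0.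
apply/eqP; rewrite -(eqn_pmul2r fact_pos); apply/eqP.
have factn := bin_fact lekn; have factm := bin_fact lekm.
have factTn := @bin_fact T n ltac:(lia); have factTm := @bin_fact T m ltac:(lia).
rewrite (_ : T - n = m - k)%N in factTn; last by lia.
rewrite (_ : T - m = n - k)%N in factTm; last by lia.
transitivity ('C(T, n) * (('C(n, k) * (k`! * (n - k)`!)) * (m - k)`!))%N; first by ring.
rewrite factn factTn.
transitivity ('C(T, m) * (('C(m, k) * (k`! * (m - k)`!)) * (n - k)`!))%N; last by ring.
by rewrite factm factTm.
Qed.

Lemma binfS_pascal k n m :
  binf k.+1 n.+1 m.+1 = (binf k.+1 n m.+1 + binf k.+1 n.+1 m + binf k n m)%N.
Proof.
case: (ltnP n k) => [lt_nk | le_kn]; first by rewrite !binf_small //; lia.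
rewrite /binf.
have -> : (n.+1 + m.+1 - k.+1 = (n + m - k).+1)%N by lia.
have -> : (n + m.+1 - k.+1 = n + m - k)%N by lia.
have -> : (n.+1 + m - k.+1 = n + m - k)%N by lia.
by rewrite !binS; ring.
Qed.

Definition binr (k : nat) : nat -> nat -> int := fun n m => (binf k n m)%:R.

Definition shift2 (e1 e2 : nat) (u : nat -> nat -> int) : nat -> nat -> int :=
  fun n m => if (e1 <= n)%N && (e2 <= m)%N then u (n - e1)%N (m - e2)%N else 0.

(* Coefficients of (1 - x - y) * u. *)
Definition Lop (u : nat -> nat -> int) : nat -> nat -> int :=
  fun n m => u n m - shift2 1 0 u n m - shift2 0 1 u n m.

Lemma Lop_binr0 n m : Lop (binr 0) n m = ((n == 0%N) && (m == 0%N))%:R.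
Proof.
rewrite /Lop /shift2 /binr !binf0 !subn1 /=.
case: n => [|n]; case: m => [|m];
  rewrite /= ?subn0 ?addn0 ?bin0 ?binn ?subrr ?subr0 //.
by rewrite !addSn !addnS binS natrD; ring.
Qed.

Lemma Lop_binrS k n m : Lop (binr k.+1) n m = shift2 1 1 (binr k) n m.
Proof.
rewrite /Lop /shift2 /binr !subn1 /=.
case: n => [|n]; first by case: m => [|m]; rewrite /= !binf_small ?subr0.
case: m => [|m]; first by rewrite /= !binf_smallr ?subr0.
by rewrite /= !subn0 binfS_pascal !natrD; ring.
Qed.

(* xy * binf n vanishes in degree n in x, because binf n vanishes below it. *)
Lemma shift2_binr_diag n m : shift2 1 1 (binr n) n m = 0.
Proof.
rewrite /shift2 /binr; case: ifP => // /andP[n_gt0 _].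
by rewrite binf_small //; lia.
Qed.

Definition tensor (u v : nat -> nat -> int) : ser := fun a b c d => u a b * v c d.

Lemma shift_tensor e1 e2 e3 e4 u v a b c d :
  shift e1 e2 e3 e4 (tensor u v) a b c d = shift2 e1 e2 u a b * shift2 e3 e4 v c d.
Proof.
rewrite /shift /shift2 /tensor.
by case: (e1 <= a)%N; case: (e2 <= b)%N; case: (e3 <= c)%N; case: (e4 <= d)%N;
   rewrite /= ?mul0r ?mulr0.
Qed.

(* D = (1-x1-x2)(1-x3-x4) - (x1 x2)(x3 x4) acts factorwise on products. *)
Lemma Dop_tensor u v a b c d :
  Dop (tensor u v) a b c d =
  Lop u a b * Lop v c d - shift2 1 1 u a b * shift2 1 1 v c d.
Proof.
have shift2_00 (w : nat -> nat -> int) n m : shift2 0 0 w n m = w n m.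
  by rewrite /shift2 !subn0.
by rewrite /Dop !shift_tensor !shift2_00 /Lop /tensor; ring.
Qed.

Lemma Dop_sum K (F : nat -> ser) a b c d :
  Dop (fun x y z w => \sum_(k < K) F k x y z w) a b c d =
  \sum_(k < K) Dop (F k) a b c d.
Proof.
have shift_sum e1 e2 e3 e4 :
    shift e1 e2 e3 e4 (fun x y z w => \sum_(k < K) F k x y z w) a b c d =
    \sum_(k < K) shift e1 e2 e3 e4 (F k) a b c d.
  by rewrite /shift; case: ifP => // _; rewrite big1.
by rewrite /Dop !shift_sum !(sumrB, big_split).
Qed.

Definition block (k : nat) : ser := tensor (binr k) (binr k).

Definition corner (k : nat) : ser := fun a b c d =>
  shift2 1 1 (binr k) a b * shift2 1 1 (binr k) c d.

Lemma Dop_block0 a b c d : Dop (block 0) a b c d = sone a b c d - corner 0 a b c d.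
Proof.
rewrite /block Dop_tensor !Lop_binr0 /sone /smono /corner -natrM.
by case: (a == 0%N); case: (b == 0%N); case: (c == 0%N); case: (d == 0%N).
Qed.

Lemma Dop_blockS k a b c d :
  Dop (block k.+1) a b c d = corner k a b c d - corner k.+1 a b c d.
Proof. by rewrite /block Dop_tensor !Lop_binrS. Qed.

Lemma sum_Dop_block K a b c d :
  \sum_(k < K.+1) Dop (block k) a b c d = sone a b c d - corner K a b c d.
Proof.
elim: K => [|K IH]; first by rewrite big_ord1 Dop_block0.
by rewrite big_ord_recr /= IH Dop_blockS addrA subrK.
Qed.

Definition Aser : ser := fun a b c d =>
  (\sum_(k < a.+1) binf k a b * binf k c d)%:R.

Lemma Aser_trunc K a b c d : (a < K)%N ->
  Aser a b c d = \sum_(k < K) block k a b c d.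
Proof.
move=> lt_aK; rewrite /Aser natr_sum -(subnKC lt_aK) big_split_ord /=.
rewrite [X in _ = _ + X]big1 ?addr0 => [|k _]; last first.
  by rewrite /block /tensor /binr binf_small ?mul0r //; lia.
by apply: eq_bigr => k _; rewrite natrM.
Qed.

Lemma Aser_inverse : smul Dser Aser = sone.
Proof.
apply: ser_ext => a b c d; rewrite Dser_conv.
rewrite (@Dop_congr _ (fun x y z w => \sum_(k < a.+1) block k x y z w)); last first.
  by move=> x y z w le_xa _ _ _; apply: Aser_trunc.
by rewrite Dop_sum sum_Dop_block /corner shift2_binr_diag mul0r subr0.
Qed.

Lemma Aser_unique A : smul Dser A = sone -> A = Aser.
Proof. by move=> DA; apply: Dop_inj; rewrite -!Dser_conv DA Aser_inverse. Qed.

(* Binomial expansion of the numerator, after writing x1+x2+x3 = (x1+x2)+x3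
   and x2+x3+x4 = (x3+x4)+x2. *)
Lemma expand_Lpoly (R : comPzRingType) (y1 y2 y3 y4 : R) n1 n2 n3 n4 :
  ((y1 + y2 + y3) ^+ n1 * (y1 + y2) ^+ n2) * ((y3 + y4) ^+ n3 * (y2 + y3 + y4) ^+ n4) =
  \sum_(0 <= k < n1.+1) \sum_(0 <= m < n4.+1) \sum_(0 <= j < (n1 - k + n2).+1)
    \sum_(0 <= l < (n4 - m + n3).+1)
    (y1 ^+ j * y2 ^+ (n1 - k + n2 - j + m) * y3 ^+ (k + (n4 - m + n3 - l)) * y4 ^+ l)
      *+ ('C(n1, k) * 'C(n4, m) * 'C(n1 - k + n2, j) * 'C(n4 - m + n3, l)).
Proof.
have -> : y2 + y3 + y4 = (y3 + y4) + y2 by ring.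
rewrite (exprDn (y1 + y2)) (exprDn (y3 + y4) y2) mulr_suml mulr_sumr.
rewrite big_distrl /= big_mkord; apply: eq_bigr => k _.
rewrite big_distrr /= big_mkord; apply: eq_bigr => m _.
transitivity (((y1 + y2) ^+ (n1 - k + n2) * (y3 + y4) ^+ (n4 - m + n3)) *
  (y3 ^+ k * y2 ^+ m) *+ ('C(n1, k) * 'C(n4, m))).
  by rewrite !exprD; ring.
rewrite (addrC y1 y2) exprDn (exprDn y3 y4) big_distrlr /= mulr_suml -sumrMnl.
rewrite big_mkord; apply: eq_bigr => j _.
rewrite mulr_suml -sumrMnl big_mkord; apply: eq_bigr => l _.
by rewrite !exprD; ring.
Qed.

Lemma coef4_sum I (r : seq I) (F : I -> P4) a b c d :
  (\sum_(i <- r) F i)`_a`_b`_c`_d = \sum_(i <- r) (F i)`_a`_b`_c`_d.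
Proof. by rewrite !coef_sum. Qed.

Lemma natr_and4 (R : pzSemiRingType) (p q r s : bool) (x : R) :
  ([&& p, q, r & s])%:R * x = p%:R * (s%:R * (q%:R * (r%:R * x))).
Proof. by case: p; case: q; case: r; case: s; rewrite ?mul0r ?mul1r. Qed.

(* The k-th group of terms of the expansion contributes
   binf k n1 n2 * binf k n3 n4 to the coefficient of x1^n1 x2^n2 x3^n3 x4^n4:
   only the terms with j = n1, l = n4 and m = k survive. *)
Lemma coef_Lpoly_term n1 n2 n3 n4 k : (k <= n1)%N ->
  (\sum_(0 <= m < n4.+1) \sum_(0 <= j < (n1 - k + n2).+1)
     \sum_(0 <= l < (n4 - m + n3).+1)
     (x1 ^+ j * x2 ^+ (n1 - k + n2 - j + m) * x3 ^+ (k + (n4 - m + n3 - l)) * x4 ^+ l)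
       *+ ('C(n1, k) * 'C(n4, m) * 'C(n1 - k + n2, j) * 'C(n4 - m + n3, l)))
    `_n1`_n2`_n3`_n4
  = (binf k n1 n2 * binf k n3 n4)%:R.
Proof.
move=> le_kn1; rewrite coef4_sum.
under eq_bigr => m _ do (rewrite coef4_sum; under eq_bigr => j _ do
  (rewrite coef4_sum; under eq_bigr => l _ do
     rewrite -mono4E !coefMn coef_mono4 -(mulr_natr [&& _, _, _ & _]%:R)
       ![(_ == j)]eq_sym ![(_ == l)]eq_sym natr_and4)).
under eq_bigr => m _ do (under eq_bigr => j _ do rewrite -mulr_sumr sum_delta;
  rewrite sum_delta).
have n1_in : (n1 < (n1 - k + n2).+1)%N = (k <= n2)%N by lia.
rewrite (_ : binf k n1 n2 = 'C(n1, k) * 'C(n1 - k + n2, n1))%N; last first.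
  by rewrite /binf; congr (_ * 'C(_, _))%N; lia.
case: (leqP k n2) => [le_kn2 | lt_n2k]; last first.
  rewrite (bin_small (n := n1 - k + n2)) ?muln0 ?mul0n; last by lia.
  by rewrite big1 // => m _; rewrite n1_in leqNgt lt_n2k mul0r.
have m_eq_k m : (n2 == n1 - k + n2 - n1 + m)%N = (m == k) by apply/eqP/eqP; lia.
under eq_bigr => m _ do rewrite m_eq_k (mulrCA _ (m == k)%:R) (mulrCA _ (m == k)%:R).
rewrite sum_delta ltnS.
case: (leqP k n4) => [le_kn4 | lt_n4k]; last first.
  by rewrite mul0r binf_smallr ?muln0.
rewrite n1_in le_kn2 !mul1r.
case: (leqP k n3) => [le_kn3 | lt_n3k]; last first.
  rewrite binf_small // muln0 (_ : (n3 == _) = false) ?mul0r ?mulr0 //.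
  by apply/eqP; lia.
rewrite (_ : (n3 == _) = true); last by apply/eqP; lia.
rewrite ltnS (_ : (n4 <= n4 - k + n3)%N = true) ?mul1r; last by lia.
rewrite (binf_sym k n3) /binf (_ : n4 + n3 - k = n4 - k + n3)%N; last by lia.
by congr (_%:R); ring.
Qed.

Lemma coef_Lpoly n1 n2 n3 n4 : (Lpoly n1 n2 n3 n4)`_n1`_n2`_n3`_n4 = Aser n1 n2 n3 n4.
Proof.
rewrite /Lpoly expand_Lpoly coef4_sum /Aser natr_sum big_mkord.
by apply: eq_bigr => k _; rewrite coef_Lpoly_term // -ltnS.
Qed.

Theorem mainTheorem2 :
  (exists A : ser, smul Dser A = sone) /\
  forall A : ser, smul Dser A = sone ->
  forall n1 n2 n3 n4 : nat,
    A n1 n2 n3 n4 =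
      (\sum_(k < n1.+1) 'C(n1, k) * 'C(n3, k) * 'C(n1 + n2 - k, n1)
                        * 'C(n3 + n4 - k, n3))%N%:Z
    /\ A n1 n2 n3 n4 = ct_div (Lnum n1 n2 n3 n4) n1 n2 n3 n4.
Proof.
split; first by exists Aser; exact: Aser_inverse.
move=> A DA n1 n2 n3 n4; rewrite (Aser_unique _ DA); split.
  by rewrite /Aser natz; congr Posz; apply: eq_bigr => k _; rewrite /binf; ring.
by rewrite /ct_div Lnum_poly toSerE coef_Lpoly.
Qed.
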